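(* Let $G$ be a directed graph with node set $V(G)=\{1,\ldots,n\}$ and let $Z\subseteq V(G)$ be a set of control nodes such that the LTI network on $G$ with control node set $Z$ is strongly structurally controllable. Then there exist a set $\mathcal{C}$ of node-disjoint chains with $\bigcup_{C\in\mathcal{C}}V(C)=V(G)$ whose set of sources is $Z$, and a time function $T$ for $\mathcal{C}$, such that $G\in\mathcal{G}^{\mathcal{C},T}$.
   Context: Graphs are directed, self-loops allowed. The qualitative class of $G$ is $\mathcal{Q}(G)=\{A\in\mathbb{R}^{n\times n}: \text{for } i\neq j,\ A_{ij}\neq0 \iff (j,i)\in E(G)\}$ (diagonal entries arbitrary). For a set of control nodes $V_C=\{j_1,\ldots,j_m\}\subseteq V(G)$, the input matrix is $B=[e_{j_1},\ldots,e_{j_m}]$, $e_j$ the $j$th column of $I_n$. The LTI network $\dot x=Ax+Bu$ on $G$ with control nodes $V_C$ is strongly structurally controllable (SSC) if $(A,B)$ is controllable for every $A\in\mathcal{Q}(G)$. A chain is a directed path graph; its start node is its source and its end node its sink; for a non-sink node $v$ of a chain, $v+1$ denotes its out-neighbor in the chain. For node-disjoint chains $\mathcal{C}=\{C_1,\ldots,C_m\}$ with $V=\bigcup_iV(C_i)$, $n=|V|$, $\gamma=n-m+1$, a time function is $T:V\to\{1,\ldots,\gamma\}$ with (1) $T(v)=1$ for every source; (2) distinct non-source nodes have distinct values; (3) $T(v)<T(v+1)$ for every non-sink $v$. Let $T_{\max}(v)=\gamma$ if $v$ is a sink and $T_{\max}(v)=T(v+1)-1$ otherwise. $\mathcal{G}^{\mathcal{C},T}$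 is the set of graphs $G$ with $V(G)=V$, $\bigcup_iE(C_i)\subseteq E(G)$, and such that for all $u,v\in V$ with $(u,v)\notin\bigcup_iE(C_i)$ and $T_{\max}(u)<T(v)$ we have $(u,v)\notin E(G)$. *)

From HB Require Import structures.
From mathcomp Require Import all_boot all_order all_algebra.
From mathcomp Require Import Rstruct.
From Stdlib Require Import Rdefinitions.
Set Implicit Arguments. Unset Strict Implicit. Unset Printing Implicit Defensive.
Import Order.TTheory GRing.Theory Num.Theory.

(* A directed graph on V = {0,...,n-1} (= {1,...,n} shifted) is an edge
   relation E : rel 'I_n; E u v means (u,v) is an edge u -> v.
   Self-loops are allowed. *)

Definition qual_class (n : nat) (E : rel 'I_n) (A : 'M[R]_n) : Prop :=
  forall i j : 'I_n, i != j -> (A i j != 0%R <-> E j i).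

Definition input_matrix (n : nat) (Z : {set 'I_n}) : 'M[R]_(n, #|Z|) :=
  \matrix_(i < n, k < #|Z|) (if i == enum_val k then 1%R else 0%R).

(* (A,B) controllable: Kalman rank condition
   rank [B, AB, ..., A^(n-1) B] = n.  The rank of this block matrix is
   the dimension of the sum of the row spaces of the transposed blocks. *)
Definition controllable (n m : nat) (A : 'M[R]_n) (B : 'M[R]_(n, m)) : Prop :=
  \rank (\sum_(k < n) <<(A ^+ k *m B)^T>>)%MS = n.

Definition SSC (n : nat) (E : rel 'I_n) (Z : {set 'I_n}) : Prop :=
  forall A : 'M[R]_n, qual_class E A -> controllable A (input_matrix Z).

(* A set of chains is represented by a list cs of node lists; each list
   c = [:: v_1; ...; v_k] is the chain v_1 -> v_2 -> ... -> v_k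
   (source v_1, sink v_k). *)

Definition chain_cover (n : nat) (cs : seq (seq 'I_n)) : Prop :=
  all (fun c => c != [::]) cs /\ uniq (flatten cs) /\
  (forall v : 'I_n, v \in flatten cs).

Definition chain_edge (n : nat) (cs : seq (seq 'I_n)) (u v : 'I_n) : bool :=
  has (fun c => (u, v) \in zip c (behead c)) cs.

Definition chain_sources (n : nat) (cs : seq (seq 'I_n)) : {set 'I_n} :=
  [set v | has (fun c => ohead c == Some v) cs].

Definition gamma (n : nat) (cs : seq (seq 'I_n)) : nat := n - size cs + 1.

Definition chain_succ (n : nat) (cs : seq (seq 'I_n)) (u : 'I_n) : option 'I_n :=
  [pick v | chain_edge cs u v].

Definition time_function (n : nat) (cs : seq (seq 'I_n)) (T : 'I_n -> nat) : Prop :=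
  (forall v, 1 <= T v <= gamma cs)%N /\
  (forall v, v \in chain_sources cs -> T v = 1%N) /\
  (forall u v, u != v -> u \notin chain_sources cs -> v \notin chain_sources cs ->
     T u != T v) /\
  (forall u v, chain_edge cs u v -> T u < T v)%N.

Definition Tmax (n : nat) (cs : seq (seq 'I_n)) (T : 'I_n -> nat) (u : 'I_n) : nat :=
  match chain_succ cs u with
  | Some v => (T v - 1)%N
  | None => gamma cs
  end.

(* G in G^{C,T} (V(G) = V holds by typing) *)
Definition in_graph_class (n : nat) (cs : seq (seq 'I_n)) (T : 'I_n -> nat)
  (E : rel 'I_n) : Prop :=
  (forall u v, chain_edge cs u v -> E u v) /\
  (forall u v, ~~ chain_edge cs u v -> (Tmax cs T u < T v)%N -> ~~ E u v).

From HB Require Import structures.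
From mathcomp Require Import all_boot all_order all_algebra.
From mathcomp Require Import Rstruct.
From Stdlib Require Import Rdefinitions.
From mathcomp Require Import zify.
Set Implicit Arguments. Unset Strict Implicit. Unset Printing Implicit Defensive.
Import Order.TTheory GRing.Theory Num.Theory.

(* Strong structural controllability forces the zero-forcing rule: every set D
   containing Z but not all nodes has a node u in D with exactly one
   out-neighbour v outside D.  Otherwise some A in Q(G) has all its columns
   summing to zero over the rows outside D, so the indicator vector of the
   complement of D is a left null vector of both A and B, violating the Kalman
   rank condition.
   Starting from the one-node chains of Z, each forcing step u -> v appends v
   to the chain of u and gives it a time larger than all previous ones.  The
   node u is then a sink: every out-neighbour of a non-sink other than its
   successor was reached before that successor.  This same invariant
   (T w < T (x+1) for every non-chain edge x -> w) is exactly membership of G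
   in G^{C,T}. *)

Section Uncontrollability.
Local Open Scope ring_scope.

Lemma controllable_left_kernel n m (A : 'M[R]_n) (B : 'M[R]_(n, m)) (z : 'cV[R]_n) :
  controllable A B -> z^T *m A = 0 -> z^T *m B = 0 -> z = 0.
Proof.
move=> ctrl zA zB.
have krylov_orth k : (A ^+ k *m B)^T *m z = 0.
  rewrite -[z]trmxK -trmx_mul mulmxA.
  case: k => [|k]; first by rewrite expr0 mulmx1 zB trmx0.
  by rewrite exprS -mulmxE mulmxA zA !mul0mx trmx0.
have sub_ker : (\sum_(k < n) <<(A ^+ k *m B)^T>> <= kermx z)%MS.
  by apply/sumsmx_subP => k _; rewrite genmxE; apply/sub_kermxP.
apply/eqP; rewrite -mxrank_eq0.
have := mxrankS sub_ker; rewrite mxrank_ker ctrl.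
have := rank_leq_row z; lia.
Qed.

End Uncontrollability.

(* Zero-forcing terminology: D is the set of coloured nodes, and u forces v
   when white_out E D u = [set v]. *)
Definition white_out n (E : rel 'I_n) (D : {set 'I_n}) (u : 'I_n) : {set 'I_n} :=
  [set w | E u w & w \notin D].

Lemma in_white_out n (E : rel 'I_n) D u w :
  (w \in white_out E D u) = E u w && (w \notin D).
Proof. by rewrite inE. Qed.

Section BalancedMatrix.
Variables (n : nat) (E : rel 'I_n) (D : {set 'I_n}).
Hypothesis no_force : forall u, u \in D -> #|white_out E D u| != 1%N.
Local Open Scope ring_scope.

Let W := white_out E D.

(* On the k >= 2 out-neighbours outside D of a node of D the weights are
   1, ..., 1, 1 - k: all nonzero, with zero sum. *)
Definition balanced_weight (i j : 'I_n) : R :=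
  if E j i then
    if (j \in D) && ([pick w in W j] == Some i) then 1 - #|W j|%:R else 1
  else 0.

Definition balanced_mx : 'M[R]_n := \matrix_(i, j)
  if i == j then
    if j \in D then 0 else - \sum_(k | (k \notin D) && (k != j)) balanced_weight k j
  else balanced_weight i j.

Definition white_indicator : 'cV[R]_n := \col_i (if i \in D then 0 else 1).

Lemma balanced_mx_qual : qual_class E balanced_mx.
Proof.
move=> i j ij; rewrite mxE (negbTE ij) /balanced_weight.
case Eji: (E j i); split => //; last by rewrite eqxx.
move=> _; case: ifP => [/andP[jD /eqP]|_]; last by rewrite oner_eq0.
case: pickP => // p Wp [pi]; subst p.
have W_gt1 : (1 < #|W j|)%nat.
  by rewrite ltn_neqAle eq_sym no_force // card_gt0; apply/set0Pn; exists i.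
by rewrite subr_eq0 eq_sym pnatr_eq1 neq_ltn W_gt1 orbT.
Qed.

Lemma sum_white_balanced_mx j : \sum_(i | i \notin D) balanced_mx i j = 0.
Proof.
case jD: (j \in D); last first.
  rewrite (bigD1 j) ?jD //= mxE eqxx jD (eq_bigr (balanced_weight^~ j)) ?addNr //.
  by move=> i /andP[_ /negbTE ij]; rewrite mxE ij.
have -> : \sum_(i | i \notin D) balanced_mx i j =
    \sum_(i in W j) (if [pick w in W j] == Some i then 1 - #|W j|%:R else 1).
  rewrite big_mkcond [RHS]big_mkcond; apply: eq_bigr => i _.
  rewrite mxE /balanced_weight !inE jD /=.
  case: (eqVneq i j) => [->|_]; first by rewrite jD andbF.
  by case: (E j i); case: (i \in D).
case: pickP => [p Wp|W0]; last by rewrite big_pred0.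
rewrite (big_setD1 p Wp) /= eqxx (eq_bigr (fun=> 1)); last first.
  by move=> i /setD1P[ip _]; case: eqP => // -[pi]; rewrite pi eqxx in ip.
by rewrite sumr_const (cardsD1 p) Wp natrD opprD addrA subrK subrr.
Qed.

Lemma white_indicator_balanced_mx : white_indicator^T *m balanced_mx = 0.
Proof.
apply/matrixP => k j; rewrite !mxE -[RHS](sum_white_balanced_mx j) [RHS]big_mkcond.
by apply: eq_bigr => i _; rewrite !mxE; case: (i \in D); rewrite ?mul0r ?mul1r.
Qed.

Lemma white_indicator_input (Z : {set 'I_n}) :
  Z \subset D -> white_indicator^T *m input_matrix Z = 0.
Proof.
move=> ZD; apply/matrixP => k l; rewrite !mxE (bigD1 (enum_val l)) //= big1.
  by rewrite !mxE (subsetP ZD _ (enum_valP l)) mul0r addr0.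
by move=> i /negbTE il; rewrite !mxE il mulr0.
Qed.

Lemma white_indicator_neq0 : D != setT -> white_indicator != 0.
Proof.
rewrite -properT => /properP[_ [x _ xD]]; apply/eqP => /matrixP/(_ x 0).
by rewrite !mxE (negbTE xD); apply/eqP; rewrite oner_eq0.
Qed.

End BalancedMatrix.

Lemma SSC_zero_forcing n (E : rel 'I_n) (Z D : {set 'I_n}) :
  SSC E Z -> Z \subset D -> D != setT ->
  exists2 u, u \in D & #|white_out E D u| == 1%N.
Proof.
move=> ssc ZD DT; apply/exists_inP; apply: contraR (white_indicator_neq0 DT).
move=> /exists_inPn no_force; apply/eqP.
apply: (controllable_left_kernel (ssc _ (balanced_mx_qual no_force))).
  exact: white_indicator_balanced_mx.
exact: white_indicator_input.
Qed.

Section ConsecutivePairs.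
Variable T : eqType.
Implicit Types (a u v x y : T) (s : seq T).

Lemma mem_zip_behead a s x y :
  (x, y) \in zip (a :: s) s -> (x \in a :: s) && (y \in s).
Proof.
elim: s a => [|b s IHs] a //=; rewrite in_cons => /orP[/eqP[-> ->]|/IHs/andP[xs ys]].
  by rewrite !in_cons !eqxx.
by rewrite xs in_cons ys !orbT.
Qed.

Lemma mem_zip_behead_rcons a s v x y :
  ((x, y) \in zip (a :: rcons s v) (rcons s v)) =
  ((x, y) \in zip (a :: s) s) || ((x, y) == (last a s, v)).
Proof.
by elim: s a => [|b s IHs] a /=; rewrite ?mem_seq1 // !in_cons IHs orbA.
Qed.

Lemma zip_behead_nonlast a s u :
  u \in a :: s -> u != last a s -> exists y, (u, y) \in zip (a :: s) s.
Proof.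
elim: s a => [|b s IHs] a /=; first by rewrite mem_seq1 => /eqP ->; rewrite eqxx.
rewrite in_cons => /orP[/eqP ->|us] ul; first by exists b; rewrite in_cons eqxx.
by have [y uy] := IHs b us ul; exists y; rewrite in_cons uy orbT.
Qed.

End ConsecutivePairs.

Section ChainSystems.
Variable n : nat.
Implicit Types (cs : seq (seq 'I_n)) (s : seq 'I_n) (a u v x y : 'I_n).

Definition covered cs : {set 'I_n} := [set x in flatten cs].

Lemma chain_edge_covered cs x y :
  chain_edge cs x y -> (x \in covered cs) && (y \in covered cs).
Proof.
case/hasP => -[//|a s] cs_as /mem_zip_behead/andP[xs ys]; rewrite !inE.
by apply/andP; split; apply/flattenP; exists (a :: s); rewrite // in_cons ys orbT.
Qed.

Lemma chain_sources_covered cs x : x \in chain_sources cs -> x \in covered cs.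
Proof.
rewrite !inE => /hasP[[//|a s] cs_as /eqP[<-]].
by apply/flattenP; exists (a :: s); rewrite ?mem_head.
Qed.

Lemma split_at_sink cs u :
  all (fun c => c != [::]) cs -> u \in covered cs -> (forall y, ~~ chain_edge cs u y) ->
  exists cs1 a s cs2, cs = cs1 ++ (a :: s) :: cs2 /\ last a s = u.
Proof.
move=> /allP nonempty; rewrite inE => /flattenP[[|a s] cs_as us] sink.
  by have := nonempty _ cs_as.
case/splitPr: cs_as sink => cs1 cs2 sink; exists cs1, a, s, cs2; split=> //.
apply/eqP; apply: contraT; rewrite eq_sym => ul.
have [y uy] := zip_behead_nonlast us ul.
by case/negP: (sink y); apply/hasP; exists (a :: s); rewrite // mem_cat mem_head orbT.
Qed.

Section Extension.
Variables (cs1 cs2 : seq (seq 'I_n)) (a v : 'I_n) (s : seq 'I_n).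
Let cs := cs1 ++ (a :: s) :: cs2.
Let cs' := cs1 ++ (a :: rcons s v) :: cs2.

Lemma perm_flatten_extend : perm_eq (flatten cs') (v :: flatten cs).
Proof.
rewrite /cs /cs' !flatten_cat /=; move: (flatten cs1) (flatten cs2) => s1 s2.
by apply/permP => p; rewrite -cats1 -catA /= !count_cat /= !count_cat /=; lia.
Qed.

Lemma covered_extend : covered cs' = v |: covered cs.
Proof. by apply/setP => x; rewrite !inE (perm_mem perm_flatten_extend) in_cons. Qed.

Lemma chain_edge_extend x y :
  chain_edge cs' x y = chain_edge cs x y || ((x, y) == (last a s, v)).
Proof.
rewrite /chain_edge !has_cat /= mem_zip_behead_rcons.
by case: ((x, y) == _); rewrite ?orbT ?orbF.
Qed.

Lemma chain_sources_extend : chain_sources cs' = chain_sources cs.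
Proof. by apply/setP => x; rewrite !inE !has_cat. Qed.

End Extension.
End ChainSystems.

Section ForcingChains.
Variables (n : nat) (E : rel 'I_n) (Z : {set 'I_n}).
Implicit Types (cs : seq (seq 'I_n)) (T : 'I_n -> nat) (u v w x y : 'I_n).

Definition horizon cs : nat := (#|covered cs| - #|Z|).+1.

Record forcing_chains cs T : Prop := ForcingChains {
  fc_nonempty : all (fun c => c != [::]) cs;
  fc_uniq : uniq (flatten cs);
  fc_sources : chain_sources cs = Z;
  fc_size : size cs = #|Z|;
  fc_range : forall x, x \in covered cs -> (0 < T x <= horizon cs)%N;
  fc_T_source : forall x, x \in chain_sources cs -> T x = 1%N;
  fc_T_inj : {in covered cs :\: chain_sources cs &, injective T};
  fc_T_increasing : forall x y, chain_edge cs x y -> (T x < T y)%N;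
  fc_edge : forall x y, chain_edge cs x y -> E x y;
  fc_branch_earlier : forall x y w, chain_edge cs x y -> E x w -> ~~ chain_edge cs x w ->
    (w \in covered cs) && (T w < T y)%N }.

Lemma forcing_chains_singletons :
  forcing_chains [seq [:: z] | z <- enum Z] (fun=> 1%N).
Proof.
set cs := map _ _.
have flatten_cs : flatten cs = enum Z by rewrite flatten_seq1.
have sources_cs : chain_sources cs = Z.
  apply/setP => x; rewrite inE has_map; apply/hasP/idP => [[z + /eqP[<-]]|Zx].
    by rewrite mem_enum.
  by exists x; rewrite ?mem_enum /=.
have no_edge x y : chain_edge cs x y = false.
  by apply/negbTE/hasP => -[_ /mapP[z _ ->]].
split=> //; rewrite ?sources_cs.
- by rewrite all_map; apply/allP.
- by rewrite flatten_cs enum_uniq.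
- by rewrite size_map cardE.
- by move=> x y; rewrite !inE flatten_cs mem_enum andNb.
- by move=> x y; rewrite no_edge.
- by move=> x y; rewrite no_edge.
- by move=> x y w; rewrite no_edge.
Qed.

Lemma forcing_chains_Z_covered cs T : forcing_chains cs T -> Z \subset covered cs.
Proof. by move=> fc; rewrite -(fc_sources fc); apply/subsetP/chain_sources_covered. Qed.

Lemma forcing_node_is_sink cs T u v :
  forcing_chains cs T -> white_out E (covered cs) u = [set v] ->
  forall y, ~~ chain_edge cs u y.
Proof.
move=> fc white_v y; apply/negP => uy.
have /[!in_white_out] /andP[Euv vD] : v \in white_out E (covered cs) u.
  by rewrite white_v set11.
have uv : ~~ chain_edge cs u v by apply: contra vD => /chain_edge_covered/andP[].
by have /andP[+ _] := fc_branch_earlier fc uy Euv uv; rewrite (negbTE vD).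
Qed.

Lemma forcing_chains_extend cs1 cs2 a s v T :
  forcing_chains (cs1 ++ (a :: s) :: cs2) T ->
  white_out E (covered (cs1 ++ (a :: s) :: cs2)) (last a s) = [set v] ->
  forcing_chains (cs1 ++ (a :: rcons s v) :: cs2)
    (fun x => if x == v then (horizon (cs1 ++ (a :: s) :: cs2)).+1 else T x).
Proof.
move=> fc white_v; set u := last a s.
have uniq_ext := perm_uniq (perm_flatten_extend cs1 cs2 a v s).
set cs := cs1 ++ (a :: s) :: cs2 in fc white_v uniq_ext *.
have /[!in_white_out] /andP[Euv vD] : v \in white_out E (covered cs) u.
  by rewrite white_v set11.
have only_v w : E u w -> w \notin covered cs -> w = v.
  by move=> Euw wD; apply/set1P; rewrite -white_v in_white_out Euw.
have old x : x \in covered cs -> (x == v) = false.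
  by move=> xD; apply: contraNF vD => /eqP <-.
have Z_covered : (#|Z| <= #|covered cs|)%N.
  exact/subset_leq_card/(forcing_chains_Z_covered fc).
have u_covered : u \in covered cs.
  by rewrite inE; apply/flattenP; exists (a :: s); rewrite ?mem_last // mem_cat mem_head orbT.
have horizon_ext : horizon (cs1 ++ (a :: rcons s v) :: cs2) = (horizon cs).+1.
  by rewrite /horizon covered_extend cardsU1 vD add1n subSn.
have range := fc_range fc.
split; rewrite ?horizon_ext ?covered_extend ?chain_sources_extend.
- by move: (fc_nonempty fc); rewrite !all_cat /= => /andP[-> ->].
- by rewrite uniq_ext /= (fc_uniq fc) andbT -[_ \in _]in_set.
- exact: fc_sources fc.
- by move: (fc_size fc); rewrite !size_cat.
- move=> x /setU1P[->|xD]; first by rewrite eqxx leqnn.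
  by rewrite old //; have := range x xD; lia.
- move=> x xS; rewrite old ?(fc_T_source fc) //; exact: chain_sources_covered.
- move=> x y /setDP[/setU1P[->|xD] xS] /setDP[/setU1P[->|yD] yS] //.
  + rewrite eqxx old // => hy; have := range y yD; lia.
  + rewrite eqxx old // => hx; have := range x xD; lia.
  + by rewrite !old //; apply: (fc_T_inj fc); apply/setDP.
- move=> x y; rewrite chain_edge_extend => /orP[xy|/eqP[-> ->]].
    have /andP[xD yD] := chain_edge_covered xy.
    by rewrite !old //; apply: (fc_T_increasing fc).
  by rewrite eqxx old // ltnS; case/andP: (range u u_covered).
- by move=> x y; rewrite chain_edge_extend => /orP[/(fc_edge fc)|/eqP[-> ->]].
- move=> x y w; rewrite !chain_edge_extend negb_or.
  case/orP=> [xy Exw /andP[xw _]|/eqP[-> ->] Euw /andP[_ wv]].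
    have /andP[wD lt] := fc_branch_earlier fc xy Exw xw.
    have /andP[_ yD] := chain_edge_covered xy.
    by rewrite in_setU1 wD orbT !old.
  have wD : w \in covered cs.
    by apply: contraNT wv => wD; rewrite (only_v w Euw wD).
  by rewrite in_setU1 wD orbT eqxx old //; have := range w wD; lia.
Qed.

Lemma forcing_chains_force cs T u v :
  forcing_chains cs T -> u \in covered cs -> white_out E (covered cs) u = [set v] ->
  exists cs' T', forcing_chains cs' T' /\ covered cs' = v |: covered cs.
Proof.
move=> fc uD white_v.
have [cs1 [a [s [cs2 [def_cs def_u]]]]] :=
  split_at_sink (fc_nonempty fc) uD (forcing_node_is_sink fc white_v).
subst cs u; exists (cs1 ++ (a :: rcons s v) :: cs2); eexists.
by split; [exact: forcing_chains_extend fc white_v | exact: covered_extend].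
Qed.

Lemma forcing_chains_cover_spec cs T :
  forcing_chains cs T -> covered cs = setT ->
  [/\ chain_cover cs, chain_sources cs = Z, time_function cs T & in_graph_class cs T E].
Proof.
move=> fc full; have covered_all x : x \in covered cs by rewrite full inE.
have gamma_horizon : gamma cs = horizon cs.
  by rewrite /gamma /horizon (fc_size fc) full cardsT card_ord addn1.
have range x : (0 < T x <= gamma cs)%N by rewrite gamma_horizon (fc_range fc).
split.
- split; first exact: fc_nonempty fc.
  by split=> [|x]; [apply: fc_uniq fc | move: (covered_all x); rewrite inE].
- exact: fc_sources fc.
- split; [exact: range | split; [exact: fc_T_source fc | split; last exact: fc_T_increasing fc]].
  move=> x y xy xS yS; apply: contra_neq xy; apply: (fc_T_inj fc); exact/setDP.
split; first exact: fc_edge fc.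
move=> x w xw; rewrite /Tmax /chain_succ; case: pickP => [y xy|no_succ] lt; apply/negP => Exw.
  by have /andP[_] := fc_branch_earlier fc xy Exw xw; lia.
by have /andP[_] := range w; lia.
Qed.

Hypothesis zero_forcing : forall D : {set 'I_n}, Z \subset D -> D != setT ->
  exists2 u, u \in D & #|white_out E D u| == 1%N.

Lemma exists_covering_forcing_chains :
  exists cs T, forcing_chains cs T /\ covered cs = setT.
Proof.
suff grow k cs T : forcing_chains cs T -> (n - #|covered cs| <= k)%N ->
    exists cs T, forcing_chains cs T /\ covered cs = setT.
  exact: grow forcing_chains_singletons (leq_subr _ _).
elim: k cs T => [|k IHk] cs T fc bound;
  have [full|partial] := eqVneq (covered cs) setT; try by exists cs, T.
  by case/negP: partial; rewrite eqEcard subsetT cardsT card_ord -subn_eq0 -leqn0.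
have [u uD /cards1P[v white_v]] := zero_forcing (forcing_chains_Z_covered fc) partial.
have /[!in_white_out] /andP[_ vD] : v \in white_out E (covered cs) u.
  by rewrite white_v set11.
have [cs' [T' [fc' grown]]] := forcing_chains_force fc uD white_v.
by apply: IHk fc' _; rewrite grown cardsU1 vD; lia.
Qed.
End ForcingChains.

Theorem theorem3 (n : nat) (E : rel 'I_n) (Z : {set 'I_n}) :
  SSC E Z ->
  exists (cs : seq (seq 'I_n)) (T : 'I_n -> nat),
    [/\ chain_cover cs, chain_sources cs = Z, time_function cs T
      & in_graph_class cs T E].
Proof.
move=> ssc.
have [cs [T [fc full]]] := exists_covering_forcing_chains (fun D => SSC_zero_forcing ssc).
by exists cs, T; apply: forcing_chains_cover_spec.
Qed.
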